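(* Let $p$ be a permutation of length $t\ge 1$. For $k\ge 0$ and $m\ge 0$ let $A_{k,m}$ be the number of permutations in $\mathcal{S}_k$ that contain exactly $m$ occurrences of $p$ as a classical pattern (with $A_{0,0}=1$ and $A_{0,m}=0$ for $m\ge 1$). For $N\ge 1$, an occurrence of the place-difference-value pattern $P=(p,(\mathbb{O},\mathbb{E},\ldots,\mathbb{E}),\emptyset,(\mathbb{E},\ldots,\mathbb{E}))$ in $\pi=\pi_1\cdots\pi_N\in\mathcal{S}_N$ is a sequence of indices $i_1<\cdots<i_t$ such that every $i_j$ is odd, every value $\pi_{i_j}$ is even, and $\pi_{i_1}\cdots\pi_{i_t}$ is order isomorphic to $p$. Let $B_{N,m}$ be the number of permutations in $\mathcal{S}_N$ with exactly $m$ occurrences of $P$. Then for all $n\ge 1$ and $m\ge 0$, $$B_{2n,m}=\sum_{k=0}^{n} n!\,(n-k)!\binom{n}{k}^{3}A_{k,m}.$$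
   Context: $\mathcal{S}_n$ denotes the set of permutations of $\{1,\dots,n\}$, written as words $\pi_1\cdots\pi_n$. $\mathbb{E}$ and $\mathbb{O}$ denote the even and odd numbers. A permutation $\sigma$ occurs (as a classical pattern) in $\pi$ at indices $i_1<\dots<i_t$ if $\pi_{i_1}\cdots\pi_{i_t}$ is order isomorphic to $\sigma$; the number of occurrences is the number of such index sequences. In the place-difference-value language, $P$ has place sets $X_0=\mathbb{O}$ (so $i_1$ is odd) and $X_j=\mathbb{E}$ for $j\ge1$ (consecutive chosen positions, and $i_t$ and $N+1$, differ by an even number), no difference conditions, and value sets all equal to $\mathbb{E}$. *)

From mathcomp Require Import all_boot all_order all_fingroup.
Set Implicit Arguments.
Unset Strict Implicit.
Unset Printing Implicit Defensive.

(* Permutations of {1..N} are modelled as 'S_N = {perm 'I_N}, i.e. on {0..N-1}.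
   A position/value x : 'I_N (0-based) corresponds to x+1 in the paper's
   1-based convention.  Hence "paper index odd"  <-> ~~ odd (val x),
   and "paper value even" <-> odd (val x). *)

Definition strict_incr (t N : nat) (f : {ffun 'I_t -> 'I_N}) : bool :=
  [forall a : 'I_t, forall b : 'I_t, (a < b)%N ==> (f a < f b)%N].

Definition order_iso (t N : nat) (p : 'S_t) (pi : 'S_N) (f : {ffun 'I_t -> 'I_N}) : bool :=
  [forall a : 'I_t, forall b : 'I_t, (pi (f a) < pi (f b))%N == (p a < p b)%N].

Definition occ (t N : nat) (p : 'S_t) (pi : 'S_N) : nat :=
  #|[set f : {ffun 'I_t -> 'I_N} | strict_incr f && order_iso p pi f]|.

Definition occP (t N : nat) (p : 'S_t) (pi : 'S_N) : nat :=
  #|[set f : {ffun 'I_t -> 'I_N} | [&& strict_incr f, order_iso p pi f,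
      [forall j : 'I_t, ~~ odd (f j)] & [forall j : 'I_t, odd (pi (f j))]]]|.

Definition A (t : nat) (p : 'S_t) (k m : nat) : nat :=
  #|[set s : 'S_k | occ p s == m]|.

Definition B (t : nat) (p : 'S_t) (N m : nat) : nat :=
  #|[set s : 'S_N | occP p s == m]|.

From mathcomp Require Import all_boot all_order all_fingroup.
From mathcomp Require Import zify.
Set Implicit Arguments. Unset Strict Implicit. Unset Printing Implicit Defensive.

(* Call a position of pi active if it lies in the place set E (the odd places)
   and carries a value in F (the even values).  The occurrences of P in pi are
   exactly the occurrences of p in the subword of pi on its active set K, i.e.
   the occurrences of p in the standardization s of that subword.  Conversely,
   pi is rebuilt from K (a k-subset of E), its image V (a k-subset of F), s,
   an injection of E \ K into the complement of F, and a bijection of the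
   remaining positions onto the remaining values.  With |E| = |F| = n and
   N = 2n this gives C(n,k)^2 * n^_(n-k) * n! = n! (n-k)! C(n,k)^3 permutations
   for each s in S_k. *)

Lemma sum_mem_card (T : finType) (A : {pred T}) : \sum_(x : T) (x \in A) = #|A|.
Proof. by rewrite -sum1_card [RHS]big_mkcond; apply: eq_bigr => x _; case: (x \in A). Qed.

Section PermCount.
Variable T : finType.

Definition perm_ext (A C R : {set T}) (h : T -> T) : {set {perm T}} :=
  [set s : {perm T} | [forall x in A, s x == h x] & [forall x in C, s x \in R]].

Definition fun_upd (h : T -> T) (c r : T) (x : T) : T := if x == c then r else h x.

Lemma perm_ext_split (A C R R' : {set T}) h c : c \notin A ->
  #|[set s in perm_ext A C R h | s c \in R']|
  = \sum_(r in R') #|perm_ext (c |: A) C R (fun_upd h c r)|.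
Proof.
move=> cA; rewrite -sum1_card (partition_big (fun s : {perm T} => s c) (mem R')) /=;
  last by move=> s; rewrite inE => /andP[].
apply: eq_bigr => r Rr; rewrite sum1_card; apply: eq_card => s.
rewrite unfold_in /= !inE /fun_upd; apply/idP/idP.
- case/andP=> /andP[/andP[/forall_inP sA sC] _] /eqP sc; rewrite sC andbT.
  apply/forall_inP => x; rewrite !inE.
  by case: eqP => [-> _|_ /= /sA //]; rewrite sc.
- case/andP=> /forall_inP sA ->.
  have sc : s c = r by apply/eqP; have := sA c; rewrite !inE eqxx; apply.
  rewrite sc Rr eqxx !andbT; apply/forall_inP => x xA.
  have := sA x; rewrite !inE xA orbT => /(_ isT).
  by case: (x =P c) => // xc; move: cA; rewrite -xc xA.
Qed.

Lemma fun_upd_inj (A : {set T}) h c r : c \notin A -> r \notin h @: A ->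
  {in A &, injective h} -> {in c |: A &, injective (fun_upd h c r)}.
Proof.
move=> cA rA hinj x y; rewrite !inE /fun_upd.
case: eqP => [->|_]; case: eqP => [->|_] //= xA yA hxy.
- by move: rA; rewrite hxy imset_f.
- by move: rA; rewrite -hxy imset_f.
- exact: hinj.
Qed.

Lemma perm_ext_image (A C R : {set T}) h s x :
  s \in perm_ext A C R h -> x \notin A -> s x \notin h @: A.
Proof.
rewrite inE => /andP[/forall_inP sA _] xA; apply/imsetP => -[y yA sxy].
by move: xA; rewrite (perm_inj (etrans sxy (esym (eqP (sA y yA))))) yA.
Qed.

Lemma card_perm_ext0 (A R : {set T}) h : {in A &, injective h} ->
  #|perm_ext A set0 R h| = (#|T| - #|A|)`!.
Proof.
move hk: (#|T| - #|A|) => k; elim: k A h hk => [|k IHk] A h hk hinj.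
  have AT : A = setT.
    by apply/eqP; rewrite eqEcard subsetT cardsT -subn_eq0 hk.
  have hbij : injective h by move=> x y; apply: hinj; rewrite AT inE.
  suff -> : perm_ext A set0 R h = [set perm hbij] by rewrite cards1.
  apply/setP => s; rewrite !inE AT; apply/andP/eqP => [[/forall_inP sA _]|->].
    by apply/permP => x; rewrite permE; apply/eqP/sA; rewrite inE.
  by split; apply/forall_inP => x; rewrite ?permE ?inE.
have [c _ cA] : exists2 c, c \in setT & c \notin A.
  by apply/subsetPn; apply/negP => /subset_leq_card; rewrite cardsT; lia.
rewrite (_ : perm_ext _ _ _ _ = [set s in perm_ext A set0 R h | s c \in ~: h @: A]); last first.
  apply/setP => s; rewrite inE; apply/esym/andb_idr.
  by move=> /perm_ext_image/(_ cA); rewrite inE.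
rewrite perm_ext_split // (eq_bigr (fun=> k`!)); last first.
  move=> r; rewrite inE => rA; rewrite IHk ?cardsU1 ?cA //; first lia.
  exact: fun_upd_inj.
have := cardsC (h @: A); rewrite sum_nat_const card_in_imset // => hC.
by rewrite factS; congr (_ * _); lia.
Qed.

Lemma perm_ext_setD1 (A C R : {set T}) h c : c \in C ->
  perm_ext A C R h = [set s in perm_ext A (C :\ c) R h | s c \in R].
Proof.
move=> cC; apply/setP => s; rewrite !inE -andbA; congr (_ && _).
apply/forall_inP/andP => [sC|[/forall_inP sC sc] x xC].
  by split; [apply/forall_inP => x /setD1P[_ /sC] | exact: sC].
by case: (x =P c) => [->|/eqP xc] //; apply: sC; rewrite !inE xc.
Qed.

Lemma perm_ext_upd_range (A C R : {set T}) h c r : c \notin C ->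
  perm_ext (c |: A) C R (fun_upd h c r) = perm_ext (c |: A) C (R :\ r) (fun_upd h c r).
Proof.
move=> cC; apply/setP => s; rewrite !inE; apply/andP/andP => -[sA /forall_inP sC].
  split=> //; apply/forall_inP => x xC; rewrite !inE sC // andbT.
  have /forall_inP/(_ c) := sA; rewrite !inE eqxx /fun_upd eqxx => /(_ isT)/eqP <-.
  by rewrite (inj_eq perm_inj); apply: contraNneq cC => <-.
by split=> //; apply/forall_inP => x /sC /setD1P[].
Qed.

Lemma disjoint_upd_image (A R : {set T}) h c r : [disjoint h @: A & R] ->
  [disjoint fun_upd h c r @: (c |: A) & R :\ r].
Proof.
move=> hAR; rewrite disjoint_subset; apply/subsetP => _ /imsetP[x xcA ->].
rewrite !inE /fun_upd; case: (x =P c) => [_|xc]; first by rewrite eqxx.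
move: xcA; rewrite !inE (introF eqP xc) /= => xA.
by rewrite (disjointFr hAR (imset_f h xA)) andbF.
Qed.

Lemma card_perm_ext (A C R : {set T}) h :
  [disjoint A & C] -> {in A &, injective h} -> [disjoint h @: A & R] ->
  #|perm_ext A C R h| = #|R| ^_ #|C| * (#|T| - #|A| - #|C|)`!.
Proof.
move hk: #|C| => k; elim: k A C R h hk => [|k IHk] A C R h hk AC hinj hAR.
  by rewrite (cards0_eq hk) card_perm_ext0 // ffactn0 mul1n subn0.
have [c cC] : exists c, c \in C by apply/card_gt0P; rewrite hk.
have cA : c \notin A by rewrite (disjointFl AC cC).
have hC : #|C :\ c| = k by move: hk; rewrite (cardsD1 c) cC add1n => -[].
have ACc : [disjoint c |: A & C :\ c].
  rewrite disjoint_subset; apply/subsetP => x; rewrite !inE.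
  by case: eqP => //= _ xA; rewrite (disjointFr AC xA).
rewrite (perm_ext_setD1 A R h cC) perm_ext_split //.
rewrite (eq_bigr (fun=> (#|R| - 1) ^_ k * (#|T| - #|A| - k.+1)`!)).
  by rewrite sum_nat_const mulnA subn1 -ffactnS.
move=> r Rr; rewrite perm_ext_upd_range ?inE ?eqxx // IHk //.
- by rewrite [#|R|](cardsD1 r) Rr add1n subn1 cardsU1 cA /=; congr (_ * _`!); lia.
- by apply: fun_upd_inj; rewrite ?(disjointFl hAR Rr).
- exact: disjoint_upd_image.
Qed.
End PermCount.

Section OrdinalSetEnum.
Variables (N : nat) (x0 : 'I_N).

Definition enum_nth (K : {set 'I_N}) (i : nat) : 'I_N := nth x0 (enum K) i.

Lemma sorted_enum_ord_set (K : {set 'I_N}) : sorted ltn (map val (enum K)).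
Proof.
rewrite -[enum _](eq_filter (mem_enum _)) -(eq_filter (mem_map val_inj _)) -filter_map.
by rewrite (sorted_filter ltn_trans) // unlock val_ord_enum iota_ltn_sorted.
Qed.

Lemma enum_nth_ltE (K : {set 'I_N}) i j : i < #|K| -> j < #|K| ->
  (enum_nth K i < enum_nth K j) = (i < j).
Proof.
move=> hi hj; rewrite /enum_nth -!(nth_map x0 (val x0)) -?cardE //.
have lt_sorted := sorted_ltn_nth ltn_trans (val x0) (sorted_enum_ord_set K).
have iE : i \in gtn (size (map val (enum K))) by rewrite inE size_map -cardE.
have jE : j \in gtn (size (map val (enum K))) by rewrite inE size_map -cardE.
case: (ltngtP i j) => [ij|ji|->]; first exact: lt_sorted.
  by apply/negbTE; rewrite -leqNgt ltnW // lt_sorted.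
by rewrite ltnn.
Qed.

Lemma enum_nth_mem (K : {set 'I_N}) i : i < #|K| -> enum_nth K i \in K.
Proof. by move=> hi; rewrite -mem_enum mem_nth // -cardE. Qed.

Lemma enum_nth_inj (K : {set 'I_N}) i j : i < #|K| -> j < #|K| ->
  enum_nth K i = enum_nth K j -> i = j.
Proof. by move=> hi hj /eqP; rewrite nth_uniq ?enum_uniq -?cardE // => /eqP. Qed.

Lemma enum_nth_index (K : {set 'I_N}) x : x \in K -> enum_nth K (index x (enum K)) = x.
Proof. by move=> xK; rewrite /enum_nth nth_index // mem_enum. Qed.

Lemma enum_nth_surj k (K : {set 'I_N}) : #|K| = k -> forall x, x \in K ->
  exists i : 'I_k, x = enum_nth K i.
Proof.
move=> hK x xK; have hx : index x (enum K) < k by rewrite -hK cardE index_mem mem_enum.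
by exists (Ordinal hx); rewrite enum_nth_index.
Qed.
End OrdinalSetEnum.

Definition occ_within (t N : nat) (p : 'S_t) (pi : 'S_N) (K : {set 'I_N}) : nat :=
  #|[set f : {ffun 'I_t -> 'I_N} |
      [&& strict_incr f, order_iso p pi f & [forall j, f j \in K]]]|.

Lemma occ_within_std t N (x0 : 'I_N) (p : 'S_t) (pi : 'S_N) k (s : 'S_k)
    (K V : {set 'I_N}) : #|K| = k -> #|V| = k ->
  (forall i : 'I_k, pi (enum_nth x0 K i) = enum_nth x0 V (s i)) ->
  occ_within p pi K = occ p s.
Proof.
move=> hK hV piE.
have posK (i j : 'I_k) : (enum_nth x0 K i < enum_nth x0 K j) = (i < j).
  by rewrite enum_nth_ltE ?hK.
have valK (i j : 'I_k) : (pi (enum_nth x0 K i) < pi (enum_nth x0 K j)) = (s i < s j).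
  by rewrite !piE enum_nth_ltE ?hV.
pose lift (g : {ffun 'I_t -> 'I_k}) := [ffun j => enum_nth x0 K (g j)].
have lift_inj : injective lift.
  move=> g1 g2 /ffunP eq12; apply/ffunP => j; apply/val_inj.
  by have := eq12 j; rewrite !ffunE; apply: enum_nth_inj; rewrite hK.
rewrite /occ -(card_imset _ lift_inj); apply: eq_card => f; rewrite !inE.
apply/idP/imsetP => [/and3P[/forallP f_incr /forallP f_iso /forallP fK]|].
- have f_std j : exists i : 'I_k, f j == enum_nth x0 K i.
    by have [i ->] := enum_nth_surj x0 hK (fK j); exists i.
  pose g := [ffun j => xchoose (f_std j)].
  have gE j : enum_nth x0 K (g j) = f j.
    by rewrite ffunE; apply/esym/eqP; exact: (xchooseP (f_std j)).
  exists g; last by apply/ffunP => j; rewrite ffunE gE.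
  rewrite inE; apply/andP; split; apply/forallP => a; apply/forallP => b.
    by rewrite -posK !gE; apply: (forallP (f_incr a)).
  by rewrite -valK !gE; apply: (forallP (f_iso a)).
- case=> g; rewrite inE => /andP[/forallP g_incr /forallP g_iso] ->.
  apply/and3P; split; apply/forallP => a; rewrite ?ffunE.
  + by apply/forallP => b; rewrite !ffunE posK; apply: (forallP (g_incr a)).
  + by apply/forallP => b; rewrite !ffunE valK; apply: (forallP (g_iso a)).
  + by apply: enum_nth_mem; rewrite hK.
Qed.

Section PlaceValuePattern.
Variables (N : nat) (x0 : 'I_N) (E F : {set 'I_N}).

Definition ksubsets (B : {set 'I_N}) k : {set {set 'I_N}} :=
  [set A : {set 'I_N} | A \subset B & #|A| == k].

Lemma mem_ksubsets (B A : {set 'I_N}) k : (A \in ksubsets B k) = (A \subset B) && (#|A| == k).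
Proof. by rewrite inE. Qed.

Definition active (pi : 'S_N) : {set 'I_N} := [set x in E | pi x \in F].

(* The permutations whose active set is K, which map K onto V, and whose
   restriction to K standardizes to s; the second condition is what makes
   K the whole active set. *)
Definition fiber k (K V : {set 'I_N}) (s : 'S_k) : {set 'S_N} :=
  [set pi : 'S_N | [forall i : 'I_k, pi (enum_nth x0 K i) == enum_nth x0 V (s i)]
                 & [forall x in E :\: K, pi x \in ~: F]].

Section Fiber.
Variables (k : nat) (K V : {set 'I_N}).
Hypotheses (KE : K \subset E) (VF : V \subset F) (hK : #|K| = k) (hV : #|V| = k).

Lemma card_fiber (s : 'S_k) :
  #|fiber K V s| = #|~: F| ^_ (#|E| - k) * (N - #|E|)`!.
Proof.
pose h x := oapp (fun i : 'I_k => enum_nth x0 V (s i)) x (insub (index x (enum K))).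
have hE (i : 'I_k) : h (enum_nth x0 K i) = enum_nth x0 V (s i).
  by rewrite /h /enum_nth index_uniq ?enum_uniq -?cardE ?hK // valK.
rewrite (_ : fiber K V s = perm_ext K (E :\: K) (~: F) h); last first.
  apply/setP => pi; rewrite !inE; congr (_ && _).
  apply/forallP/forall_inP => [piK x /(enum_nth_surj x0 hK) [i ->]|piK i].
    by rewrite hE; apply: piK.
  by rewrite -hE; apply/piK/enum_nth_mem; rewrite hK.
have hinj : {in K &, injective h}.
  move=> _ _ /(enum_nth_surj x0 hK) [i ->] /(enum_nth_surj x0 hK) [j ->].
  rewrite !hE => /enum_nth_inj; rewrite hV => /(_ (ltn_ord _) (ltn_ord _)).
  by move=> /val_inj/perm_inj ->.
rewrite card_perm_ext ?cardsT ?card_ord.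
- rewrite cardsD (setIidPr KE) hK; congr (_ * _`!).
  have := subset_leq_card KE; rewrite hK => kE; have := max_card E; rewrite card_ord; lia.
- by rewrite disjoint_subset; apply/subsetP => x xK; rewrite !inE xK.
- exact: hinj.
rewrite disjoint_subset; apply/subsetP => _ /imsetP[_ /(enum_nth_surj x0 hK) [i ->] ->].
by rewrite hE !inE negbK (subsetP VF) // enum_nth_mem ?hV.
Qed.

Lemma mem_fiber_image (s : 'S_k) pi x : pi \in fiber K V s -> x \in K -> pi x \in V.
Proof.
rewrite inE => /andP[/forallP piK _] /(enum_nth_surj x0 hK) [i ->].
by rewrite (eqP (piK i)) enum_nth_mem ?hV.
Qed.

Lemma mem_fiber_active (s : 'S_k) pi :
  pi \in fiber K V s -> active pi = K /\ pi @: K = V.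
Proof.
move=> piY; have piKV := mem_fiber_image piY.
have activeK : active pi = K.
  apply/setP => x; rewrite !inE; apply/andP/idP => [[xE pixF]|xK].
    apply: contraTT pixF => xK; move: piY; rewrite inE => /andP[_ /forall_inP].
    by move/(_ x); rewrite !inE xK xE => /(_ isT).
  by rewrite (subsetP KE) ?(subsetP VF) ?piKV.
split=> //; apply/eqP; rewrite eqEcard (card_imset _ perm_inj) hK hV leqnn andbT.
by apply/subsetP => _ /imsetP[x xK ->]; apply: piKV.
Qed.

Lemma mem_fiber_inj (s1 s2 : 'S_k) pi :
  pi \in fiber K V s1 -> pi \in fiber K V s2 -> s1 = s2.
Proof.
rewrite !inE => /andP[/forallP pi1 _] /andP[/forallP pi2 _]; apply/permP => i.
have := pi1 i; rewrite (eqP (pi2 i)) => /eqP /enum_nth_inj.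
by rewrite hV => /(_ (ltn_ord _) (ltn_ord _)) /val_inj.
Qed.
End Fiber.

Lemma exists_std k (K V : {set 'I_N}) (pi : 'S_N) : #|K| = k -> #|V| = k ->
  {in K, forall x, pi x \in V} ->
  exists s : 'S_k, forall i : 'I_k, pi (enum_nth x0 K i) = enum_nth x0 V (s i).
Proof.
move=> hK hV piKV.
have piV (i : 'I_k) : pi (enum_nth x0 K i) \in V by rewrite piKV ?enum_nth_mem ?hK.
have std (i : 'I_k) : exists j : 'I_k, pi (enum_nth x0 K i) == enum_nth x0 V j.
  by have [j ->] := enum_nth_surj x0 hV (piV i); exists j.
pose f := [ffun i => xchoose (std i)].
have fE (i : 'I_k) : pi (enum_nth x0 K i) = enum_nth x0 V (f i).
  by rewrite ffunE; apply/eqP; exact: (xchooseP (std i)).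
have f_inj : injective f.
  move=> i j fij; apply/val_inj/(@enum_nth_inj _ x0 K); rewrite ?hK ?ltn_ord //.
  by apply: (@perm_inj _ pi); rewrite !fE fij.
by exists (perm f_inj) => i; rewrite permE.
Qed.

Definition occ_on t (p : 'S_t) (pi : 'S_N) : nat := occ_within p pi (active pi).

Lemma occ_on_fiber t (p : 'S_t) k (K V : {set 'I_N}) (s : 'S_k) pi :
  K \subset E -> V \subset F -> #|K| = k -> #|V| = k ->
  pi \in fiber K V s -> occ_on p pi = occ p s.
Proof.
move=> KE VF hK hV piY; rewrite /occ_on; have [-> _] := mem_fiber_active KE VF hK hV piY.
apply: (occ_within_std (x0 := x0) p hK hV) => i.
by move: piY; rewrite inE => /andP[/forallP /(_ i) /eqP].
Qed.

Lemma sum_fibers k (pi : 'S_N) :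
  \sum_(K in ksubsets E k)
    \sum_(V in ksubsets F k) \sum_(s : 'S_k) (pi \in fiber K V s)
  = (#|active pi| == k).
Proof.
have fiber_active K V (s : 'S_k) : K \in ksubsets E k ->
    V \in ksubsets F k -> pi \in fiber K V s ->
    active pi = K /\ pi @: K = V.
  by rewrite !mem_ksubsets => /andP[KE /eqP hK] /andP[VF /eqP hV]; apply: mem_fiber_active.
have [hk|hk] := eqVneq #|active pi| k; last first.
  apply: big1 => K KS; apply: big1 => V VS; apply: big1 => s _.
  apply/eqP; rewrite eqb0; apply/negP => /(fiber_active _ _ _ KS VS) [activeK _].
  by move: KS hk; rewrite mem_ksubsets activeK => /andP[_ ->].
set K0 := active pi; set V0 := pi @: K0.
have K0E : K0 \subset E by apply/subsetP => x; rewrite inE => /andP[].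
have V0F : V0 \subset F.
  by apply/subsetP => _ /imsetP[x + ->]; rewrite inE => /andP[].
have hV0 : #|V0| = k by rewrite (card_imset _ perm_inj) hk.
have [s0 piE] := exists_std hk hV0 (fun x xK => imset_f pi xK).
have pi_s0 : pi \in fiber K0 V0 s0.
  rewrite inE; apply/andP; split; first by apply/forallP => i; rewrite piE.
  by apply/forall_inP => x; rewrite !inE => /andP[+ xE]; rewrite xE.
have K0S : K0 \in ksubsets E k by rewrite mem_ksubsets K0E hk eqxx.
have V0S : V0 \in ksubsets F k by rewrite mem_ksubsets V0F hV0 eqxx.
rewrite (bigD1 K0 K0S) /= [X in _ + X]big1 ?addn0; last first.
  move=> K /andP[KS KK0]; apply: big1 => V VS; apply: big1 => s _; apply/eqP.
  by rewrite eqb0; apply/negP => /(fiber_active _ _ _ KS VS) [K0K _]; rewrite -K0K eqxx in KK0.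
rewrite (bigD1 V0 V0S) /= [X in _ + X]big1 ?addn0; last first.
  move=> V /andP[VS VV0]; apply: big1 => s _; apply/eqP.
  by rewrite eqb0; apply/negP => /(fiber_active _ _ _ K0S VS) [_ V0V]; rewrite -V0V eqxx in VV0.
rewrite (bigD1 s0) //= pi_s0 [X in _ + X]big1 // => s ss0; apply/eqP; rewrite eqb0.
apply: contra ss0 => pi_s; apply/eqP.
by move: pi_s pi_s0; apply: mem_fiber_inj.
Qed.

Lemma sum_fibers_occ t (p : 'S_t) (m : nat) k (pi : 'S_N) :
  \sum_(K in ksubsets E k) \sum_(V in ksubsets F k) \sum_(s : 'S_k)
     (pi \in fiber K V s) * (occ p s == m)
  = (#|active pi| == k) * (occ_on p pi == m).
Proof.
rewrite -sum_fibers !big_distrl; apply: eq_bigr => K; rewrite mem_ksubsets => /andP[KE /eqP hK].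
rewrite big_distrl; apply: eq_bigr => V; rewrite mem_ksubsets => /andP[VF /eqP hV].
rewrite big_distrl; apply: eq_bigr => s _.
by case: (boolP (pi \in fiber K V s)) => // piY; rewrite (occ_on_fiber p KE VF hK hV piY).
Qed.

Lemma card_occ_on t (p : 'S_t) (m : nat) :
  #|[set pi : 'S_N | occ_on p pi == m]| =
  \sum_(k < #|E|.+1)
    'C(#|E|, k) * 'C(#|F|, k) * (#|~: F| ^_ (#|E| - k) * (N - #|E|)`!) * A p k m.
Proof.
have count_by_fibers (pi : 'S_N) : nat_of_bool (occ_on p pi == m) = \sum_(k < #|E|.+1)
    \sum_(K in ksubsets E k) \sum_(V in ksubsets F k) \sum_(s : 'S_k)
      (pi \in fiber K V s) * (occ p s == m).
  have hk : #|active pi| < #|E|.+1.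
    by rewrite ltnS subset_leq_card //; apply/subsetP => x; rewrite inE => /andP[].
  under eq_bigr do rewrite sum_fibers_occ.
  rewrite (bigD1 (Ordinal hk)) //= eqxx mul1n big1 ?addn0 // => k.
  by rewrite -val_eqE eq_sym => /negbTE ->.
transitivity (\sum_(pi : 'S_N) \sum_(k < #|E|.+1) \sum_(K in ksubsets E k)
    \sum_(V in ksubsets F k) \sum_(s : 'S_k) (pi \in fiber K V s) * (occ p s == m)).
  rewrite -sum_mem_card; apply: eq_bigr => pi _.
  by rewrite -count_by_fibers inE.
rewrite exchange_big; apply: eq_bigr => k _.
set c := #|~: F| ^_ (#|E| - k) * (N - #|E|)`!.
rewrite exchange_big /= (eq_bigr (fun=> 'C(#|F|, k) * (c * A p k m))); last first.
  move=> K KS; rewrite exchange_big /= (eq_bigr (fun=> c * A p k m)); last first.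
    move=> V VS; rewrite exchange_big /= /A -sum_mem_card big_distrr; apply: eq_bigr => s _.
    move: KS VS; rewrite !mem_ksubsets => /andP[KE /eqP hK] /andP[VF /eqP hV].
    rewrite /c -(card_fiber KE VF hK hV s) -sum_mem_card big_distrl inE /=.
    by apply: eq_bigr => pi _; rewrite mulnC.
  by rewrite sum_nat_const cards_draws.
by rewrite sum_nat_const cards_draws !mulnA.
Qed.
End PlaceValuePattern.

Definition evens N : {set 'I_N} := [set x : 'I_N | ~~ odd x].
Definition odds N : {set 'I_N} := [set x : 'I_N | odd x].

Lemma setC_evens N : ~: evens N = odds N.
Proof. by apply/setP => x; rewrite !inE negbK. Qed.

Lemma odds_double_rev n : odds (2 * n) = @rev_ord _ @: evens (2 * n).
Proof.
have odd_rev (x : 'I_(2 * n)) : odd (rev_ord x) = ~~ odd x.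
  by rewrite /= oddB ?ltn_ord // oddM oddS.
by apply/setP => x; rewrite -[x]rev_ordK (mem_imset _ _ (@rev_ord_inj _)) !inE odd_rev.
Qed.

Lemma card_evens_double n : #|evens (2 * n)| = n.
Proof.
have := cardsC (evens (2 * n)).
rewrite setC_evens odds_double_rev (card_imset _ (@rev_ord_inj _)) card_ord.
by rewrite addnn -mul2n => /eqP; rewrite eqn_pmul2l // => /eqP.
Qed.

Lemma card_odds_double n : #|odds (2 * n)| = n.
Proof. by rewrite odds_double_rev (card_imset _ (@rev_ord_inj _)) card_evens_double. Qed.

Lemma occP_occ_on t N (p : 'S_t) (pi : 'S_N) : occP p pi = occ_on (evens N) (odds N) p pi.
Proof.
apply: eq_card => f; rewrite !inE; congr [&& _, _ & _].
apply/andP/forallP => [[/forallP fE /forallP fF] j|fEF]; first by rewrite !inE fE fF.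
by split; apply/forallP => j; have := fEF j; rewrite !inE => /andP[].
Qed.

Theorem mainTheorem1 (t : nat) (p : 'S_t) (ht : (1 <= t)%N) (n m : nat)
  (hn : (1 <= n)%N) :
  B p (2 * n) m =
  (\sum_(0 <= k < n.+1) n`! * (n - k)`! * 'C(n, k) ^ 3 * A p k m)%N.
Proof.
have x0 : 'I_(2 * n) by exists 0; rewrite muln_gt0.
have -> : B p (2 * n) m = #|[set pi : 'S_(2 * n) | occ_on (evens _) (odds _) p pi == m]|.
  by apply: eq_card => pi; rewrite !inE occP_occ_on.
rewrite (card_occ_on x0) -setC_evens setCK card_evens_double setC_evens card_odds_double.
rewrite big_mkord; apply: eq_bigr => k _; have kn : k <= n by rewrite -ltnS.
rewrite (_ : 2 * n - n = n); last by lia.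
by rewrite -(bin_sub kn) -bin_ffact (bin_sub kn) !expnS expn0; lia.
Qed.
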